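(* Let $\ell$ be a positive even integer, let $n$ be a positive integer that is a multiple of $\ell/2$, and let $u:\{-n,\dots,n\}\to\mathbb{R}$ satisfy $u(j)=u(-j)$ for all $j$ and $\sum_{j=-n}^{n}u(j)=1$. Assume that there exists a polynomial $Q(z)=\sum_{k=0}^{m}b_kz^k$ (with complex coefficients) having no zeros in the open unit disk $\mathbb{D}=\{z\in\mathbb{C}:|z|<1\}$ such that $\widehat{u}(\xi)=|Q(e^{i\xi})|^{\ell}$ for all $\xi\in\mathbb{T}$. Then $$\sup_{0\neq f\in\ell^2(\mathbb{Z})}\frac{\|\nabla^{\ell}(u\ast f)\|_{\ell^2(\mathbb{Z})}}{\|f\|_{\ell^2(\mathbb{Z})}}\ \ge\ \left(\frac{2}{1+2n/\ell}\right)^{\ell}.$$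
   Context: Functions on $\{-n,\dots,n\}$ are regarded as functions on $\mathbb{Z}$ vanishing outside $\{-n,\dots,n\}$. The discrete derivative is $\nabla g(k)=g(k+1)-g(k)$ and $\nabla^{\ell}=\nabla(\nabla^{\ell-1})$. Convolution: $(u\ast f)(k)=\sum_{j\in\mathbb{Z}}u(j)f(k-j)$. $\mathbb{T}=\mathbb{R}/2\pi\mathbb{Z}$ and the Fourier transform is $\widehat{u}(\xi)=\sum_{k}u(k)e^{-ik\xi}$. The supremum is over nonzero (complex-valued) $f\in\ell^2(\mathbb{Z})$. *)

From Stdlib Require Import Reals ZArith Arith.
From Coquelicot Require Import Coquelicot.
Open Scope R_scope.

Definition zsum_win (n : nat) (F : Z -> C) : C :=
  sum_n (fun k : nat => F (Z.of_nat k - Z.of_nat n)%Z) (2 * n).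

(* Sum over all of Z of a real family (used for nonnegative families). *)
Definition zseries (a : Z -> R) : R :=
  Series (fun k : nat => a (Z.of_nat k)) + Series (fun k : nat => a (- Z.of_nat (S k))%Z).

Definition in_l2 (f : Z -> C) : Prop :=
  ex_series (fun k : nat => Cmod (f (Z.of_nat k)) ^ 2) /\
  ex_series (fun k : nat => Cmod (f (- Z.of_nat (S k))%Z) ^ 2).

Definition l2norm (f : Z -> C) : R := sqrt (zseries (fun k => Cmod (f k) ^ 2)).

Definition nabla (g : Z -> C) : Z -> C := fun k => Cminus (g (k + 1)%Z) (g k).
Definition nabla_pow (l : nat) (g : Z -> C) : Z -> C := Nat.iter l nabla g.

(* Convolution (u * f)(k) = sum_j u(j) f(k-j), for u vanishing outside {-n..n}
   (so the sum over Z reduces to the window {-n..n}). *)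
Definition conv (n : nat) (u : Z -> R) (f : Z -> C) : Z -> C :=
  fun k => zsum_win n (fun j => Cmult (RtoC (u j)) (f (k - j)%Z)).

Definition cexpi (t : R) : C := (cos t, sin t).

Definition fourier (n : nat) (u : Z -> R) (xi : R) : C :=
  zsum_win n (fun k => Cmult (RtoC (u k)) (cexpi (- IZR k * xi))).

Definition poly_eval (m : nat) (b : nat -> C) (z : C) : C :=
  sum_n (fun k => Cmult (b k) (pow_n z k)) m.

Definition op_sup (l n : nat) (u : Z -> R) : Rbar :=
  Lub_Rbar (fun r => exists f : Z -> C,
     in_l2 f /\ (exists k, f k <> RtoC 0) /\
     r = l2norm (nabla_pow l (conv n u f)) / l2norm f).

From Stdlib Require Import Reals ZArith Arith Lra Lia Classical.
From Coquelicot Require Import Coquelicot.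
From mathcomp Require all_boot all_algebra zify ring complex Rstruct.
Open Scope R_scope.

(* Testing the operator on truncated characters f(k) = e^{ikxi} 1_{|k| <= N} and letting
   N -> oo shows that the supremum dominates the symbol |(e^{ixi} - 1)^l u^(xi)|, which equals
   (|e^{ixi} - 1| |Q(e^{ixi})|)^l.  Write l = 2s and n = qs.  The identity u^ = |Q|^{2s} between
   trigonometric polynomials forces deg Q <= q: the extreme coefficient of (Q(z) Q^*(1/z))^s
   sits in degree s deg Q and is nonzero because Q(0) <> 0, while u^ has degree n.  Moreover
   |Q(1)| = 1 since sum u = 1.  Finally, for P of degree < N, the quadrature
   sum_k P(z_k) w_k = (N/2) P(1) over the N-th roots z_k of -1, with weights satisfying
   w_k (z_k - 1) = z_k and sum_k |w_k|^2 = N^2/4, produces a node with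
   |z_k - 1| |P(z_k)| >= 2 |P(1)| / N.  With N = q + 1 = 1 + 2n/l this is the claim. *)

(** * Complex exponentials and finite sums *)

Lemma cexpi_add (a b : R) : (cexpi a * cexpi b)%C = cexpi (a + b).
Proof.
  unfold cexpi, Cmult; simpl; rewrite cos_plus, sin_plus.
  apply injective_projections; simpl; ring.
Qed.

Lemma cexpi_0 : cexpi 0 = 1.
Proof. unfold cexpi; rewrite cos_0, sin_0; reflexivity. Qed.

Lemma cexpi_PI : cexpi PI = (- 1)%C.
Proof. unfold cexpi; rewrite cos_PI, sin_PI; apply injective_projections; simpl; ring. Qed.

Lemma cexpi_period (t : R) (k : nat) : cexpi (t + 2 * INR k * PI) = cexpi t.
Proof. unfold cexpi; rewrite cos_period, sin_period; reflexivity. Qed.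

Lemma cexpi_2PI_mult (k : nat) : cexpi (2 * INR k * PI) = 1.
Proof. rewrite <- (Rplus_0_l (2 * INR k * PI)), cexpi_period; apply cexpi_0. Qed.

Lemma Cmod_cexpi (t : R) : Cmod (cexpi t) = 1.
Proof.
  unfold Cmod, cexpi; simpl; rewrite !Rmult_1_r.
  rewrite <- sqrt_1; f_equal. pose proof (sin2_cos2 t) as H; unfold Rsqr in H; lra.
Qed.

Lemma Cconj_cexpi (t : R) : Cconj (cexpi t) = cexpi (- t).
Proof. unfold cexpi, Cconj; rewrite cos_neg, sin_neg; reflexivity. Qed.

Lemma pow_n_cexpi (t : R) (k : nat) : pow_n (cexpi t) k = cexpi (INR k * t).
Proof.
  induction k as [|k IH].
  - simpl; rewrite Rmult_0_l, cexpi_0; reflexivity.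
  - change (pow_n (cexpi t) (S k)) with (cexpi t * pow_n (cexpi t) k)%C.
    rewrite IH, cexpi_add, S_INR; f_equal; ring.
Qed.

Lemma cexpi_neq_1 (t : R) : 0 < Rabs t < 2 * PI -> cexpi t <> 1.
Proof.
  intros Ht E.
  assert (Hcos : cos (2 * (t / 2)) = 1).
  { replace (2 * (t / 2)) with t by field. exact (f_equal fst E). }
  rewrite cos_2a_sin in Hcos.
  assert (Hsin : sin (Rabs t / 2) = 0).
  { destruct (Rle_or_lt 0 t); [rewrite Rabs_right by lra | rewrite Rabs_left by lra].
    - nra.
    - replace (- t / 2) with (- (t / 2)) by field. rewrite sin_neg. nra. }
  pose proof (sin_gt_0 (Rabs t / 2)). lra.
Qed.

Lemma cexpi_inj_0_PI (x y : R) : 0 <= x <= PI -> 0 <= y <= PI -> cexpi x = cexpi y -> x = y.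
Proof. intros Hx Hy E. apply cos_inj; try lra. exact (f_equal fst E). Qed.

Lemma cexpi_odd_mult_PI (k : nat) : cexpi (- ((2 * INR k + 1) * PI)) = (- 1)%C.
Proof.
  rewrite <- (cexpi_period _ (S k)), S_INR, <- cexpi_PI; f_equal; ring.
Qed.

(* Equations between [sum_n] terms are stated in the carrier of [C_AbelianMonoid],
   which [ring] does not recognise as [C]. *)
Ltac C_ring := match goal with |- ?a = ?b => change (@eq C a b) end; ring.

Lemma sum_Sn_C (a : nat -> C) (K : nat) : sum_n a (S K) = (sum_n a K + a (S K))%C.
Proof. exact (sum_Sn (G := C_AbelianMonoid) a K). Qed.

Lemma sum_Sn_R (a : nat -> R) (K : nat) : sum_n a (S K) = sum_n a K + a (S K).
Proof. exact (sum_Sn (G := R_AbelianMonoid) a K). Qed.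

Lemma sum_n_Cmult_l (c : C) (f : nat -> C) (K : nat) :
  sum_n (fun k => c * f k)%C K = (c * sum_n f K)%C.
Proof. exact (sum_n_mult_l (K := C_Ring) c f K). Qed.

Lemma sum_n_Cmult_r (c : C) (f : nat -> C) (K : nat) :
  sum_n (fun k => f k * c)%C K = (sum_n f K * c)%C.
Proof. exact (sum_n_mult_r (K := C_Ring) c f K). Qed.

Lemma sum_n_const_C (c : C) (K : nat) : sum_n (fun _ => c) K = (INR (S K) * c)%C.
Proof.
  induction K as [|K IH].
  - rewrite sum_O; simpl; apply injective_projections; simpl; ring.
  - rewrite sum_Sn_C, IH, (S_INR (S K)); apply injective_projections; simpl; ring.
Qed.

Lemma sum_n_single (f : nat -> C) (i K : nat) : (i <= K)%nat ->
  (forall j, (j <= K)%nat -> j <> i -> f j = 0) -> sum_n f K = f i.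
Proof.
  induction K as [|K IH]; intros Hi Hf.
  - rewrite sum_O; replace i with 0%nat by lia; reflexivity.
  - rewrite sum_Sn_C. destruct (Nat.eq_dec i (S K)) as [->|Hne].
    + rewrite (sum_n_ext_loc _ (fun _ => RtoC 0)) by (intros j Hj; apply Hf; lia).
      rewrite sum_n_const_C; C_ring.
    + rewrite IH, (Hf (S K)) by (intros; try apply Hf; lia). C_ring.
Qed.

Lemma telescoping_sum_C (g : nat -> C) (K : nat) :
  sum_n (fun j => g j - g (S j))%C K = (g 0%nat - g (S K))%C.
Proof.
  induction K as [|K IH].
  - apply sum_O.
  - rewrite sum_Sn_C, IH; C_ring.
Qed.

Lemma geometric_sum_cexpi (a : R) (K : nat) :
  ((cexpi a - 1) * sum_n (fun k => cexpi (INR k * a)) K)%C = (cexpi (INR (S K) * a) - 1)%C.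
Proof.
  rewrite <- sum_n_Cmult_l.
  rewrite (sum_n_ext _ (fun k => - cexpi (INR k * a) - - cexpi (INR (S k) * a))%C).
  - rewrite telescoping_sum_C; simpl INR; rewrite Rmult_0_l, cexpi_0; C_ring.
  - intros k. transitivity (cexpi a * cexpi (INR k * a) - cexpi (INR k * a))%C; [C_ring|].
    rewrite cexpi_add, S_INR, Rmult_plus_distr_r, Rmult_1_l, Rplus_comm; C_ring.
Qed.

Lemma RtoC_sum_n (f : nat -> R) (K : nat) : RtoC (sum_n f K) = sum_n (fun k => RtoC (f k)) K.
Proof.
  induction K as [|K IH].
  - rewrite !sum_O; reflexivity.
  - rewrite sum_Sn_R, sum_Sn_C, <- IH; apply injective_projections; simpl; ring.
Qed.

Lemma Cconj_sum_n (f : nat -> C) (K : nat) : Cconj (sum_n f K) = sum_n (fun k => Cconj (f k)) K.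
Proof.
  induction K as [|K IH].
  - rewrite !sum_O; reflexivity.
  - rewrite !sum_Sn_C, <- IH; apply injective_projections; simpl; ring.
Qed.

Lemma Cmod_sum_n_le (f : nat -> C) (K : nat) : Cmod (sum_n f K) <= sum_n (fun k => Cmod (f k)) K.
Proof.
  induction K as [|K IH].
  - rewrite !sum_O; lra.
  - rewrite sum_Sn_C, sum_Sn_R. eapply Rle_trans; [apply Cmod_triangle | lra].
Qed.

Lemma sum_n_lt (f g : nat -> R) (K : nat) :
  (forall k, (k <= K)%nat -> f k < g k) -> sum_n f K < sum_n g K.
Proof.
  induction K as [|K IH]; intros H.
  - rewrite !sum_O; apply H; lia.
  - rewrite !sum_Sn_R. apply Rplus_lt_compat; [apply IH; intros; apply H | apply H]; lia.
Qed.

Lemma sum_n_Rmult_l (c : R) (f : nat -> R) (K : nat) :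
  sum_n (fun k => c * f k) K = c * sum_n f K.
Proof. exact (sum_n_mult_l (K := R_Ring) c f K). Qed.

Lemma sum_n_trunc {G : AbelianMonoid} (a : nat -> G) (K N : nat) : (K <= N)%nat ->
  (forall k, (K < k <= N)%nat -> a k = zero) -> sum_n a N = sum_n a K.
Proof.
  intros HN; induction HN as [|N HN IH]; intros Ha; [reflexivity|].
  rewrite sum_Sn, IH, (Ha (S N)) by (lia || (intros; apply Ha; lia)).
  apply plus_zero_r.
Qed.

(** * A quadrature rule on the roots of -1 *)

(* [cexpi (node N k)], [k < N], are the [N]-th roots of [-1]. *)
Definition node (N k : nat) : R := (2 * INR k + 1) * PI / INR N.

Definition quad_weight (N k : nat) : C :=
  (RtoC (/ 2) * sum_n (fun j => cexpi (- INR j * node N k)) (N - 1))%C.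

Lemma Rabs_INR_sub_ge_1 (i j : nat) : i <> j -> 1 <= Rabs (INR i - INR j).
Proof.
  intros Hij. destruct (Nat.lt_total i j) as [H|[H|H]]; [|lia|].
  - apply le_INR in H; rewrite S_INR in H. rewrite Rabs_left; lra.
  - apply le_INR in H; rewrite S_INR in H. rewrite Rabs_right; lra.
Qed.

Lemma sum_cexpi_nodes_diff (N i j : nat) : (i < N)%nat -> (j < N)%nat -> i <> j ->
  sum_n (fun k => cexpi ((INR i - INR j) * node N k)) (N - 1) = RtoC 0.
Proof.
  intros Hi Hj Hij.
  assert (HN : 0 < INR N) by (apply lt_0_INR; lia).
  set (x := INR i - INR j); set (a := 2 * PI / INR N * x).
  assert (Hx : 1 <= Rabs x < INR N).
  { split; [apply Rabs_INR_sub_ge_1, Hij|].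
    apply lt_INR in Hi; apply lt_INR in Hj; pose proof (pos_INR i); pose proof (pos_INR j).
    apply Rabs_def1; unfold x; lra. }
  assert (Ha : cexpi a <> 1).
  { apply cexpi_neq_1. pose proof PI_RGT_0.
    assert (Hc : 2 * PI / INR N * INR N = 2 * PI) by (field; lra).
    assert (Hc0 : 0 < 2 * PI / INR N) by (apply Rdiv_lt_0_compat; lra).
    unfold a; rewrite Rabs_mult, (Rabs_right (2 * PI / INR N)) by lra. nra. }
  assert (Hperiod : cexpi (INR (S (N - 1)) * a) = 1).
  { replace (INR (S (N - 1)) * a) with (2 * INR i * PI - 2 * INR j * PI)
      by (replace (S (N - 1)) with N by lia; unfold a, x; field; lra).
    rewrite <- (cexpi_period _ j), <- cexpi_2PI_mult with (k := i); f_equal; ring. }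
  rewrite (sum_n_ext _ (fun k => cexpi (PI / INR N * x) * cexpi (INR k * a))%C)
    by (intros k; rewrite cexpi_add; f_equal; unfold node, a; field; lra).
  rewrite sum_n_Cmult_l.
  assert (Hgeo := geometric_sum_cexpi a (N - 1)); rewrite Hperiod in Hgeo.
  replace (1 - 1)%C with (RtoC 0) in Hgeo by C_ring.
  destruct (classic (sum_n (fun k => cexpi (INR k * a)) (N - 1) = RtoC 0)) as [E|E].
  - rewrite E; C_ring.
  - exfalso; refine (Cmult_neq_0 (cexpi a - 1) _ _ E Hgeo).
    intros E'; apply Ha. rewrite <- (Cplus_0_l 1), <- E'; C_ring.
Qed.

Lemma sum_node_moments (N i : nat) : (i < N)%nat ->
  sum_n (fun k => pow_n (cexpi (node N k)) i * quad_weight N k)%C (N - 1) = RtoC (INR N / 2).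
Proof.
  intros Hi. unfold quad_weight.
  rewrite (sum_n_ext _ (fun k => RtoC (/ 2) *
             sum_n (fun j => cexpi ((INR i - INR j) * node N k)) (N - 1))%C).
  2:{ intros k. rewrite pow_n_cexpi.
      transitivity (RtoC (/ 2) * sum_n (fun j =>
                      cexpi (INR i * node N k) * cexpi (- INR j * node N k)) (N - 1))%C.
      - rewrite sum_n_Cmult_l; C_ring.
      - f_equal; apply sum_n_ext; intros j; rewrite cexpi_add; f_equal; ring. }
  rewrite sum_n_Cmult_l, (sum_n_switch (G := C_AbelianMonoid)).
  rewrite (sum_n_single _ i) by (lia || (intros j Hj Hji; apply sum_cexpi_nodes_diff; lia)).
  rewrite (sum_n_ext _ (fun _ => RtoC 1))
    by (intros k; rewrite Rminus_diag, Rmult_0_l; apply cexpi_0).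
  rewrite sum_n_const_C; replace (S (N - 1)) with N by lia.
  apply injective_projections; simpl; field.
Qed.

Lemma quadrature (N m : nat) (b : nat -> C) : (0 < N)%nat ->
  (forall i, (N <= i <= m)%nat -> b i = 0) ->
  sum_n (fun k => poly_eval m b (cexpi (node N k)) * quad_weight N k)%C (N - 1)
  = (RtoC (INR N / 2) * poly_eval m b (cexpi 0))%C.
Proof.
  intros HN Hb. unfold poly_eval.
  rewrite (sum_n_ext _ (fun k => sum_n (fun i =>
             b i * (pow_n (cexpi (node N k)) i * quad_weight N k)) m)%C).
  2:{ intros k. rewrite <- sum_n_Cmult_r. apply sum_n_ext; intros i; C_ring. }
  rewrite (sum_n_switch (G := C_AbelianMonoid)), <- sum_n_Cmult_l.
  apply sum_n_ext_loc; intros i Hi.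
  rewrite sum_n_Cmult_l.
  destruct (le_lt_dec N i) as [HNi|HiN].
  - rewrite Hb by lia; C_ring.
  - rewrite sum_node_moments by exact HiN.
    rewrite pow_n_cexpi, Rmult_0_r, cexpi_0; C_ring.
Qed.

Lemma quad_weight_mul_node_sub_1 (N k : nat) : (0 < N)%nat ->
  (quad_weight N k * (cexpi (node N k) - 1))%C = cexpi (node N k).
Proof.
  intros HN. assert (HNr : 0 < INR N) by (apply lt_0_INR; lia).
  set (g j := cexpi ((1 - INR j) * node N k)).
  unfold quad_weight. rewrite <- Cmult_assoc, <- sum_n_Cmult_r.
  rewrite (sum_n_ext _ (fun j => g j - g (S j))%C).
  2:{ intros j. unfold g.
      transitivity (cexpi (- INR j * node N k) * cexpi (node N k)
                    - cexpi (- INR j * node N k))%C; [C_ring|].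
      rewrite cexpi_add, S_INR; f_equal; (f_equal; ring). }
  rewrite telescoping_sum_C; unfold g; replace (S (N - 1)) with N by lia.
  replace ((1 - INR N) * node N k) with (node N k + - ((2 * INR k + 1) * PI))
    by (unfold node; field; lra).
  rewrite <- cexpi_add, cexpi_odd_mult_PI, Rminus_0_r, Rmult_1_l.
  apply injective_projections; simpl; field.
Qed.

Lemma Cmod_quad_weight_mul (N k : nat) : (0 < N)%nat ->
  Cmod (quad_weight N k) * Cmod (cexpi (node N k) - 1) = 1.
Proof.
  intros HN; rewrite <- Cmod_mult, quad_weight_mul_node_sub_1 by exact HN; apply Cmod_cexpi.
Qed.

Lemma Cconj_quad_weight (N k : nat) :
  Cconj (quad_weight N k) = poly_eval (N - 1) (fun _ => RtoC (/ 2)) (cexpi (node N k)).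
Proof.
  unfold quad_weight, poly_eval.
  rewrite Cmult_conj, Cconj_sum_n, <- sum_n_Cmult_l.
  apply sum_n_ext; intros j.
  rewrite Cconj_cexpi, pow_n_cexpi, Ropp_mult_distr_l, Ropp_involutive.
  apply injective_projections; simpl; ring.
Qed.

Lemma sum_Cmod_quad_weight_sqr (N : nat) : (0 < N)%nat ->
  sum_n (fun k => Cmod (quad_weight N k) ^ 2) (N - 1) = (INR N / 2) ^ 2.
Proof.
  intros HN.
  assert (HC : RtoC (sum_n (fun k => Cmod (quad_weight N k) ^ 2) (N - 1))
               = RtoC ((INR N / 2) ^ 2)).
  { rewrite RtoC_sum_n.
    rewrite (sum_n_ext _ (fun k => Cconj (quad_weight N k) * quad_weight N k)%C)
      by (intros k; rewrite Cmod2_conj; apply Cmult_comm).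
    rewrite (sum_n_ext _ (fun k =>
               poly_eval (N - 1) (fun _ => RtoC (/ 2)) (cexpi (node N k)) * quad_weight N k)%C)
      by (intros k; rewrite Cconj_quad_weight; reflexivity).
    rewrite quadrature by (easy || lia).
    unfold poly_eval.
    rewrite (sum_n_ext _ (fun _ => RtoC (/ 2)))
      by (intros i; rewrite pow_n_cexpi, Rmult_0_r, cexpi_0; apply Cmult_1_r).
    rewrite sum_n_const_C; replace (S (N - 1)) with N by lia.
    apply injective_projections; simpl; field. }
  exact (f_equal fst HC).
Qed.

Lemma exists_unit_circle_point_ge (N m : nat) (b : nat -> C) : (0 < N)%nat ->
  (forall i, (N <= i <= m)%nat -> b i = 0) ->
  exists t, 2 * Cmod (poly_eval m b (cexpi 0)) / INR N
            <= Cmod (cexpi t - 1) * Cmod (poly_eval m b (cexpi t)).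
Proof.
  intros HN Hb. assert (HNr : 0 < INR N) by (apply lt_0_INR; lia).
  set (Q := poly_eval m b); set (c := 2 * Cmod (Q (cexpi 0)) / INR N).
  apply NNPP; intros Hnone.
  assert (Hlt : forall t, Cmod (cexpi t - 1) * Cmod (Q (cexpi t)) < c).
  { intros t; apply Rnot_le_lt; intros H; apply Hnone; exists t; exact H. }
  assert (Hterm : forall k, (k <= N - 1)%nat ->
            Cmod (Q (cexpi (node N k)) * quad_weight N k) < c * Cmod (quad_weight N k) ^ 2).
  { intros k _. pose proof (Cmod_quad_weight_mul N k HN) as Hw.
    assert (Hw0 : 0 < Cmod (quad_weight N k)).
    { pose proof (Cmod_ge_0 (quad_weight N k)).
      destruct (Req_dec (Cmod (quad_weight N k)) 0) as [E|E]; [rewrite E in Hw|]; lra. }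
    replace (Cmod (Q (cexpi (node N k)) * quad_weight N k))
      with (Cmod (cexpi (node N k) - 1) * Cmod (Q (cexpi (node N k))) * Cmod (quad_weight N k) ^ 2).
    2:{ rewrite Cmod_mult.
        transitivity (Cmod (Q (cexpi (node N k))) * Cmod (quad_weight N k)
                      * (Cmod (quad_weight N k) * Cmod (cexpi (node N k) - 1)));
          [ring | rewrite Hw; ring]. }
    apply Rmult_lt_compat_r; [nra | apply Hlt]. }
  assert (Hupper : sum_n (fun k => Cmod (Q (cexpi (node N k)) * quad_weight N k)) (N - 1)
                   < c * (INR N / 2) ^ 2).
  { rewrite <- sum_Cmod_quad_weight_sqr, <- sum_n_Rmult_l by exact HN.
    apply sum_n_lt, Hterm. }
  assert (Hlower := Cmod_sum_n_le (fun k => Q (cexpi (node N k)) * quad_weight N k)%C (N - 1)).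
  unfold Q in Hlower; rewrite quadrature, Cmod_mult, Cmod_R, Rabs_right in Hlower
    by (exact HN || exact Hb || lra).
  assert (Hc : c * (INR N / 2) ^ 2 = INR N / 2 * Cmod (Q (cexpi 0))) by (unfold c; field; lra).
  fold Q in Hlower; lra.
Qed.

(** * Truncated characters: the supremum dominates the symbol *)

Lemma conv_support (n K : nat) (u : Z -> R) (f : Z -> C) :
  (forall k, (Z.of_nat K < Z.abs k)%Z -> f k = 0) ->
  forall k, (Z.of_nat (K + n) < Z.abs k)%Z -> conv n u f k = 0.
Proof.
  intros Hf k Hk. unfold conv, zsum_win.
  rewrite (sum_n_ext_loc _ (fun _ => RtoC 0)), sum_n_const_C by (intros i Hi; rewrite Hf by lia; C_ring).
  C_ring.
Qed.

Lemma conv_cexpi_on (n K : nat) (u : Z -> R) (f : Z -> C) (xi : R) :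
  (forall k, (Z.abs k <= Z.of_nat K)%Z -> f k = cexpi (IZR k * xi)) ->
  forall k, (Z.abs k + Z.of_nat n <= Z.of_nat K)%Z ->
  conv n u f k = (cexpi (IZR k * xi) * fourier n u xi)%C.
Proof.
  intros Hf k Hk. unfold conv, fourier, zsum_win. rewrite <- sum_n_Cmult_l.
  apply sum_n_ext_loc; intros i Hi. rewrite Hf by lia.
  transitivity (u (Z.of_nat i - Z.of_nat n)%Z
                * (cexpi (IZR k * xi) * cexpi (- IZR (Z.of_nat i - Z.of_nat n) * xi)))%C.
  - rewrite cexpi_add, minus_IZR; f_equal; f_equal; ring.
  - C_ring.
Qed.

Lemma nabla_pow_support (g : Z -> C) (a b : Z) (j : nat) :
  (forall k, (k < a \/ b < k)%Z -> g k = 0) ->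
  forall k, (k + Z.of_nat j < a \/ b < k)%Z -> nabla_pow j g k = 0.
Proof.
  intros Hg. induction j as [|j IH]; intros k Hk.
  - apply Hg; lia.
  - change (nabla_pow (S j) g k) with (nabla_pow j g (k + 1)%Z - nabla_pow j g k)%C.
    rewrite !IH by lia; C_ring.
Qed.

Lemma nabla_pow_cexpi_on (g : Z -> C) (a b : Z) (c : C) (xi : R) (j : nat) :
  (forall k, (a <= k <= b)%Z -> g k = (cexpi (IZR k * xi) * c)%C) ->
  forall k, (a <= k)%Z -> (k + Z.of_nat j <= b)%Z ->
  nabla_pow j g k = (cexpi (IZR k * xi) * ((cexpi xi - 1) ^ j * c))%C.
Proof.
  intros Hg. induction j as [|j IH]; intros k Ha Hb.
  - rewrite Hg by lia; simpl; C_ring.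
  - change (nabla_pow (S j) g k) with (nabla_pow j g (k + 1)%Z - nabla_pow j g k)%C.
    rewrite !IH by lia. rewrite Cpow_S, plus_IZR, Rmult_plus_distr_r, Rmult_1_l, <- cexpi_add.
    C_ring.
Qed.

Lemma is_series_finite_support (a : nat -> R) (K : nat) :
  (forall k, (K < k)%nat -> a k = 0) -> is_series a (sum_n a K).
Proof.
  intros Ha. apply filterlim_ext_loc with (fun _ => sum_n a K); [|apply filterlim_const].
  exists K; intros N HN. symmetry; apply sum_n_trunc; [exact HN | intros k Hk; apply Ha; lia].
Qed.

Lemma zseries_finite_support (a : Z -> R) (K : nat) :
  (forall k, (Z.of_nat K < Z.abs k)%Z -> a k = 0) ->
  ex_series (fun k => a (Z.of_nat k)) /\ ex_series (fun k => a (- Z.of_nat (S k))%Z) /\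
  zseries a = sum_n (fun k => a (Z.of_nat k)) K + sum_n (fun k => a (- Z.of_nat (S k))%Z) K.
Proof.
  intros Ha.
  assert (Hpos := is_series_finite_support (fun k => a (Z.of_nat k)) K).
  assert (Hneg := is_series_finite_support (fun k => a (- Z.of_nat (S k))%Z) K).
  specialize (Hpos (fun k Hk => Ha (Z.of_nat k) ltac:(lia))).
  specialize (Hneg (fun k Hk => Ha (- Z.of_nat (S k))%Z ltac:(lia))).
  split; [eexists; exact Hpos | split; [eexists; exact Hneg|]].
  unfold zseries; rewrite (is_series_unique _ _ Hpos), (is_series_unique _ _ Hneg); reflexivity.
Qed.

Lemma sum_n_le_loc (f g : nat -> R) (K : nat) :
  (forall k, (k <= K)%nat -> f k <= g k) -> sum_n f K <= sum_n g K.
Proof.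
  induction K as [|K IH]; intros H.
  - rewrite !sum_O; apply H; lia.
  - rewrite !sum_Sn_R. apply Rplus_le_compat; [apply IH; intros; apply H | apply H]; lia.
Qed.

Lemma sum_n_le_succ (a : nat -> R) (K : nat) :
  (forall k, (k <= K)%nat -> a k <= 1) -> sum_n a K <= INR (S K).
Proof.
  intros H. rewrite <- (Rmult_1_r (INR (S K))), <- sum_n_const. apply sum_n_le_loc, H.
Qed.

Lemma sum_n_ge_const (a : nat -> R) (v : R) (K K' : nat) : (K' <= K)%nat ->
  (forall k, (k <= K)%nat -> 0 <= a k) -> (forall k, (k <= K')%nat -> v <= a k) ->
  INR (S K') * v <= sum_n a K.
Proof.
  intros HK Hpos Hv. rewrite <- sum_n_const.
  apply Rle_trans with (sum_n a K'); [apply sum_n_le_loc, Hv|].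
  clear Hv. induction HK as [|K HK IH]; [lra|].
  rewrite sum_Sn_R.
  assert (sum_n a K' <= sum_n a K) by (apply IH; intros; apply Hpos; lia).
  specialize (Hpos (S K) (le_n _)). lra.
Qed.

Definition test_fn (N : nat) (xi : R) (k : Z) : C :=
  if (Z.abs k <=? Z.of_nat N)%Z then cexpi (IZR k * xi) else 0.

Lemma test_fn_in (N : nat) (xi : R) (k : Z) :
  (Z.abs k <= Z.of_nat N)%Z -> test_fn N xi k = cexpi (IZR k * xi).
Proof. intros H; unfold test_fn; destruct (Z.leb_spec (Z.abs k) (Z.of_nat N)); [reflexivity | lia]. Qed.

Lemma test_fn_out (N : nat) (xi : R) (k : Z) :
  (Z.of_nat N < Z.abs k)%Z -> test_fn N xi k = 0.
Proof. intros H; unfold test_fn; destruct (Z.leb_spec (Z.abs k) (Z.of_nat N)); [lia | reflexivity]. Qed.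

Lemma Cmod_test_fn_le_1 (N : nat) (xi : R) (k : Z) : Cmod (test_fn N xi k) <= 1.
Proof.
  unfold test_fn; destruct (Z.abs k <=? Z.of_nat N)%Z;
    [rewrite Cmod_cexpi | rewrite Cmod_0]; lra.
Qed.

Lemma zseries_test_fn_bounds (N : nat) (xi : R) :
  in_l2 (test_fn N xi) /\
  1 <= zseries (fun k => Cmod (test_fn N xi k) ^ 2) <= 2 * INR N + 2.
Proof.
  destruct (zseries_finite_support (fun k => Cmod (test_fn N xi k) ^ 2) N) as [Hpos [Hneg ->]].
  { intros k Hk; rewrite test_fn_out, Cmod_0 by exact Hk; ring. }
  assert (Hle : forall k : Z, Cmod (test_fn N xi k) ^ 2 <= 1).
  { intros k; pose proof (Cmod_test_fn_le_1 N xi k); pose proof (Cmod_ge_0 (test_fn N xi k)); nra. }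
  split; [split; assumption|split].
  - assert (H0 : INR 1 * 1 <= sum_n (fun k => Cmod (test_fn N xi (Z.of_nat k)) ^ 2) N).
    { apply sum_n_ge_const; [lia | intros; apply pow2_ge_0 |].
      intros k Hk; replace k with 0%nat by lia.
      rewrite test_fn_in, Cmod_cexpi by (simpl; lia); lra. }
    assert (H1 : INR 1 * 0 <= sum_n (fun k => Cmod (test_fn N xi (- Z.of_nat (S k))%Z) ^ 2) N)
      by (apply sum_n_ge_const; [lia | intros; apply pow2_ge_0 | intros; apply pow2_ge_0]).
    change (INR 1) with 1 in H0, H1; lra.
  - pose proof (sum_n_le_succ (fun k => Cmod (test_fn N xi (Z.of_nat k)) ^ 2) N (fun k _ => Hle _)).
    pose proof (sum_n_le_succ (fun k => Cmod (test_fn N xi (- Z.of_nat (S k))%Z) ^ 2) N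
                  (fun k _ => Hle _)).
    rewrite S_INR in *; lra.
Qed.

Lemma zseries_nabla_conv_test_fn_ge (l n N : nat) (u : Z -> R) (xi : R) : (n + l < N)%nat ->
  Cmod ((cexpi xi - 1) ^ l * fourier n u xi)%C ^ 2 * (2 * INR N - 2 * INR n - INR l + 1)
  <= zseries (fun k => Cmod (nabla_pow l (conv n u (test_fn N xi)) k) ^ 2).
Proof.
  intros HN.
  set (h := nabla_pow l (conv n u (test_fn N xi))).
  set (c := Cmod ((cexpi xi - 1) ^ l * fourier n u xi)%C).
  assert (Hconv_out := conv_support n N u (test_fn N xi) (test_fn_out N xi)).
  assert (Hconv_in := conv_cexpi_on n N u (test_fn N xi) xi (test_fn_in N xi)).
  assert (Hh_out : forall k, (Z.of_nat (N + n + l) < Z.abs k)%Z -> h k = 0).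
  { intros k Hk. apply (nabla_pow_support _ (- Z.of_nat (N + n)) (Z.of_nat (N + n))); [|lia].
    intros k' Hk'; apply Hconv_out; lia. }
  assert (Hh_in : forall k, (Z.of_nat n - Z.of_nat N <= k)%Z ->
            (k + Z.of_nat l <= Z.of_nat N - Z.of_nat n)%Z -> Cmod (h k) ^ 2 = c ^ 2).
  { intros k H1 H2. unfold h.
    rewrite (nabla_pow_cexpi_on _ (Z.of_nat n - Z.of_nat N) (Z.of_nat N - Z.of_nat n)
               (fourier n u xi) xi) by (intros; try apply Hconv_in; lia).
    rewrite Cmod_mult, Cmod_cexpi, Rmult_1_l; reflexivity. }
  destruct (zseries_finite_support (fun k => Cmod (h k) ^ 2) (N + n + l)) as [_ [_ ->]].
  { intros k Hk; rewrite Hh_out, Cmod_0 by exact Hk; ring. }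
  assert (Hpos : INR (S (N - n - l)) * c ^ 2 <= sum_n (fun k => Cmod (h (Z.of_nat k)) ^ 2) (N + n + l)).
  { apply sum_n_ge_const; [lia | intros; apply pow2_ge_0 | intros k Hk; rewrite Hh_in by lia; lra]. }
  assert (Hneg : INR (S (N - n - 1)) * c ^ 2
                 <= sum_n (fun k => Cmod (h (- Z.of_nat (S k))%Z) ^ 2) (N + n + l)).
  { apply sum_n_ge_const; [lia | intros; apply pow2_ge_0 | intros k Hk; rewrite Hh_in by lia; lra]. }
  assert (Hcount : INR (S (N - n - l)) + INR (S (N - n - 1)) = 2 * INR N - 2 * INR n - INR l + 1).
  { assert (E : (S (N - n - l) + S (N - n - 1) + 2 * n + l = 2 * N + 1)%nat) by lia.
    apply (f_equal INR) in E; rewrite !plus_INR, !mult_INR in E.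
    change (INR 2) with (1 + 1) in E; change (INR 1) with 1 in E; lra. }
  nra.
Qed.

Lemma Rle_of_forall_nat_affine (a b A B : R) :
  (forall M : nat, a * (INR M + A) <= b * (INR M + B)) -> a <= b.
Proof.
  intros H. apply Rnot_lt_le; intros Hba.
  destruct (INR_archimed (a - b) (b * B - a * A)) as [M HM]; [lra|].
  specialize (H M). lra.
Qed.

Lemma test_fn_ratio_ge (l n : nat) (u : Z -> R) (xi : R) (M : nat) :
  let f := test_fn (M + n + l + 1) xi in
  in_l2 f /\ f 0%Z <> 0 /\
  0 <= l2norm (nabla_pow l (conv n u f)) / l2norm f /\
  Cmod ((cexpi xi - 1) ^ l * fourier n u xi)%C ^ 2 * (INR M + (INR l + 3) / 2)
  <= (l2norm (nabla_pow l (conv n u f)) / l2norm f) ^ 2 * (INR M + INR n + INR l + 2).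
Proof.
  intros f; unfold f; set (N := (M + n + l + 1)%nat).
  destruct (zseries_test_fn_bounds N xi) as [Hl2 [Hf1 Hf2]].
  pose proof (zseries_nabla_conv_test_fn_ge l n N u xi ltac:(lia)) as Hh.
  assert (HN : INR N = INR M + INR n + INR l + 1) by (unfold N; rewrite !plus_INR; reflexivity).
  rewrite HN in Hf2, Hh.
  unfold l2norm.
  set (Zf := zseries (fun k => Cmod (test_fn N xi k) ^ 2)) in *.
  set (Zh := zseries (fun k => Cmod (nabla_pow l (conv n u (test_fn N xi)) k) ^ 2)) in *.
  set (c := Cmod ((cexpi xi - 1) ^ l * fourier n u xi)%C) in *.
  assert (Hc : 0 <= c ^ 2) by apply pow2_ge_0.
  assert (HZh : c ^ 2 * (2 * INR M + INR l + 3) <= Zh) by lra.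
  assert (0 <= c ^ 2 * (2 * INR M + INR l + 3))
    by (apply Rmult_le_pos; [exact Hc | pose proof (pos_INR M); pose proof (pos_INR l); lra]).
  split; [exact Hl2 | split; [|split]].
  - rewrite test_fn_in, Rmult_0_l, cexpi_0 by lia.
    intros E; apply (f_equal fst) in E; simpl in E; lra.
  - apply Rdiv_le_0_compat; [apply sqrt_pos | apply sqrt_lt_R0; lra].
  - unfold Rdiv; rewrite Rpow_mult_distr, pow_inv, !pow2_sqrt by lra.
    apply Rle_trans with (Zh / 2); [lra|].
    apply Rle_trans with (Zh * / Zf * (Zf / 2)); [right; field; lra|].
    apply Rmult_le_compat_l; [apply Rmult_le_pos; [lra | apply Rlt_le, Rinv_0_lt_compat; lra] | lra].
Qed.

Lemma op_sup_ge_symbol (l n : nat) (u : Z -> R) (xi : R) :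
  Rbar_le (Finite (Cmod ((cexpi xi - 1) ^ l * fourier n u xi)%C)) (op_sup l n u).
Proof.
  set (c := Cmod ((cexpi xi - 1) ^ l * fourier n u xi)%C).
  unfold op_sup. set (E := fun r => exists f : Z -> C, _).
  destruct (Lub_Rbar_correct E) as [Hub _].
  assert (Hratio : forall M : nat, exists r, E r /\ 0 <= r /\
            c ^ 2 * (INR M + (INR l + 3) / 2) <= r ^ 2 * (INR M + INR n + INR l + 2)).
  { intros M. destruct (test_fn_ratio_ge l n u xi M) as [Hl2 [Hf0 [Hr0 Hr]]].
    eexists; split; [| exact (conj Hr0 Hr)].
    eexists; split; [exact Hl2 | split; [exists 0%Z; exact Hf0 | reflexivity]]. }
  destruct (Lub_Rbar E) as [x| |]; simpl; [| exact I |].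
  - assert (Hx : forall M : nat, c ^ 2 * (INR M + (INR l + 3) / 2)
                                 <= x ^ 2 * (INR M + (INR n + INR l + 2))).
    { intros M. destruct (Hratio M) as [r [Er [Hr0 Hr]]].
      assert (Hrx : r <= x) by exact (Hub r Er).
      pose proof (pos_INR M); pose proof (pos_INR n); pose proof (pos_INR l).
      assert (r ^ 2 <= x ^ 2) by nra. nra. }
    apply Rle_of_forall_nat_affine in Hx.
    destruct (Hratio 0%nat) as [r [Er [Hr0 _]]]; assert (Hrx : r <= x) by exact (Hub r Er).
    assert (0 <= c) by apply Cmod_ge_0. nra.
  - destruct (Hratio 0%nat) as [r [Er _]]; exact (Hub r Er).
Qed.

(** * The degree of [Q] *)

Lemma fourier_opp_mul_pow (n : nat) (u : Z -> R) (t : R) :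
  (fourier n u (- t) * pow_n (cexpi t) n)%C
  = poly_eval (2 * n) (fun i => RtoC (u (Z.of_nat i - Z.of_nat n)%Z)) (cexpi t).
Proof.
  unfold fourier, zsum_win, poly_eval. rewrite <- sum_n_Cmult_r.
  apply sum_n_ext; intros i. rewrite !pow_n_cexpi, <- Cmult_assoc, cexpi_add.
  f_equal; f_equal. rewrite minus_IZR, <- !INR_IZR_INZ; ring.
Qed.

Lemma Cconj_poly_eval_cexpi (d : nat) (b : nat -> C) (t : R) :
  Cconj (poly_eval d b (cexpi (- t))) = poly_eval d (fun i => Cconj (b i)) (cexpi t).
Proof.
  unfold poly_eval. rewrite Cconj_sum_n. apply sum_n_ext; intros i.
  rewrite Cmult_conj, !pow_n_cexpi, Cconj_cexpi; do 3 f_equal; ring.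
Qed.

Lemma RtoC_Cmod_pow_even (z : C) (s : nat) : RtoC (Cmod z ^ (2 * s)) = ((Cconj z * z) ^ s)%C.
Proof. rewrite pow_mult, RtoC_pow, Cmod2_conj, Cmult_comm; reflexivity. Qed.

Lemma circle_identity (s n d : nat) (u : Z -> R) (b : nat -> C) :
  (forall xi, fourier n u xi = RtoC (Cmod (poly_eval d b (cexpi xi)) ^ (2 * s))) ->
  forall t, ((poly_eval d (fun i => Cconj (b i)) (cexpi t) * poly_eval d b (cexpi (- t))) ^ s
             * pow_n (cexpi t) n)%C
          = poly_eval (2 * n) (fun i => RtoC (u (Z.of_nat i - Z.of_nat n)%Z)) (cexpi t).
Proof.
  intros H t.
  rewrite <- fourier_opp_mul_pow, H, RtoC_Cmod_pow_even, Cconj_poly_eval_cexpi; reflexivity.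
Qed.

Lemma cexpi_grid_inj (K i j : nat) : (i < K)%nat -> (j < K)%nat ->
  cexpi (INR i / INR K) = cexpi (INR j / INR K) -> i = j.
Proof.
  intros Hi Hj E. assert (HK : 0 < INR K) by (apply lt_0_INR; lia).
  assert (Hgrid : forall k, (k < K)%nat -> 0 <= INR k / INR K <= PI).
  { intros k Hk. apply lt_INR in Hk. pose proof (pos_INR k). pose proof PI2_1.
    split; [apply Rdiv_le_0_compat; lra|].
    apply Rle_trans with 1; [|lra].
    apply Rmult_le_reg_r with (INR K); [lra|].
    unfold Rdiv; rewrite Rmult_assoc, Rinv_l by lra; lra. }
  apply cexpi_inj_0_PI in E; [|apply Hgrid; lia ..].
  apply INR_eq. apply (f_equal (fun x => x * INR K)) in E.
  unfold Rdiv in E; rewrite !Rmult_assoc, Rinv_l, !Rmult_1_r in E by lra; exact E.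
Qed.

Lemma Cconj_neq_0 (z : C) : z <> 0 -> Cconj z <> 0.
Proof.
  intros Hz E; apply Hz. rewrite <- (Cconj_conj z), E.
  apply injective_projections; simpl; ring.
Qed.

(* [max_poly_roots] is applied after transporting Coquelicot's [C] to MathComp's [R[i]]. *)
Module PolyDegree.
Import all_boot all_algebra zify ring complex Rstruct GRing.Theory.

Section LaurentPolynomials.
Local Open Scope ring_scope.

(* Multiplied by [w ^+ (d * s)], both sides become polynomials in [w]: the left one has
   degree exactly [2ds] (leading coefficient [(a d * c 0) ^+ s]), the right one degree at
   most [ds + n].  If [n < ds], their difference has more roots than its degree. *)
Lemma laurent_power_degree_le (K : fieldType) (s n d : nat) (a c v : nat -> K) (S : seq K) :
  (0 < s)%N -> a d != 0 -> c 0%N != 0 -> uniq S -> (2 * d * s < size S)%N ->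
  {in S, forall w, w != 0 /\
     ((\sum_(i < d.+1) a i * w ^+ i) * (\sum_(i < d.+1) c i * w^-1 ^+ i)) ^+ s * w ^+ n
     = \sum_(i < (2 * n).+1) v i * w ^+ i} ->
  (d * s <= n)%N.
Proof.
  move=> s0 ad c0 uS szS HS; rewrite leqNgt; apply/negP => nds.
  pose pa : {poly K} := \poly_(i < d.+1) a i.
  pose pc : {poly K} := \poly_(i < d.+1) c (d - i)%N.
  pose pv : {poly K} := \poly_(i < (2 * n).+1) v i.
  pose P := (pa * pc) ^+ s - 'X^(d * s - n) * pv.
  have szpa : size pa = d.+1 by rewrite size_poly_eq.
  have szpc : size pc = d.+1 by rewrite size_poly_eq //= subnn.
  have pac0 : pa * pc != 0 by rewrite mulf_neq0 // -size_poly_eq0 ?szpa ?szpc.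
  have szL : size ((pa * pc) ^+ s) = (2 * d * s).+1.
  { rewrite -[LHS]prednK ?lt0n ?size_poly_eq0 ?expf_neq0 // size_exp size_mul ?szpa ?szpc.
    all: try (by rewrite -size_poly_eq0 ?szpa ?szpc).
    rewrite addSn addnS /=; lia. }
  have szR : (size ('X^(d * s - n) * pv)%R < (2 * d * s).+1)%N.
  { apply: leq_ltn_trans (size_polyMleq _ _) _; rewrite size_polyXn.
    have := size_poly (2 * n).+1 v; rewrite -/pv; lia. }
  have szP : size P = (2 * d * s).+1 by rewrite size_polyDl ?size_polyN szL.
  have P0 : P != 0 by rewrite -size_poly_eq0 szP.
  suff : all (root P) S by move=> /(max_poly_roots P0)/(_ uS); rewrite szP ltnS leqNgt szS.
  apply/allP => w wS; have [w0 Hw] := HS w wS.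
  rewrite /root /P hornerD hornerN !hornerM hornerXn horner_exp hornerM !horner_poly.
  have -> : \sum_(i < d.+1) c (d - i)%N * w ^+ i = w ^+ d * \sum_(i < d.+1) c i * w^-1 ^+ i.
  { rewrite big_distrr (reindex_inj rev_ord_inj) /=; apply: eq_bigr => i _.
    have hi : (i <= d)%N by rewrite -ltnS.
    have -> : w ^+ d = w ^+ (d - i) * w ^+ i by rewrite -exprD subnK.
    rewrite subSS subKn // exprVn; field; exact: expf_neq0. }
  rewrite -Hw mulrCA exprMn -exprM.
  have -> : w ^+ (d * s) = w ^+ (d * s - n) * w ^+ n by rewrite -exprD subnK // ltnW.
  apply/eqP; ring.
Qed.

End LaurentPolynomials.

Section ComplexTransfer.
Local Open Scope ring_scope.

Definition phi (z : C) : R[i] := Complex (fst z) (snd z).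

Lemma phiD (z w : C) : phi (Cplus z w) = phi z + phi w.
Proof. by case: z w => [z1 z2] [w1 w2]. Qed.

Lemma phiM (z w : C) : phi (Cmult z w) = phi z * phi w.
Proof. by case: z w => [z1 z2] [w1 w2]. Qed.

Lemma phi_inj : injective phi.
Proof. by case=> [z1 z2] [w1 w2] [-> ->]. Qed.

Lemma phi_sum_n (f : nat -> C) (K : nat) : phi (sum_n f K) = \sum_(i < K.+1) phi (f i).
Proof.
  elim: K => [|K IH]; first by rewrite sum_O big_ord_recr big_ord0 /= add0r.
  by rewrite sum_Sn_C phiD IH [in RHS]big_ord_recr.
Qed.

Lemma phi_pow_n (z : C) (k : nat) : phi (pow_n z k) = phi z ^+ k.
Proof. elim: k => [|k IH] //=; by rewrite exprS -IH -phiM. Qed.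

Lemma phi_Cpow (z : C) (k : nat) : phi (Cpow z k) = phi z ^+ k.
Proof. elim: k => [|k IH] //; by rewrite Cpow_S exprS phiM IH. Qed.

Lemma phi_cexpi_opp (t : R) : phi (cexpi (- t)) = (phi (cexpi t))^-1.
Proof. by apply/esym/mulr1_eq; rewrite -phiM cexpi_add Rplus_opp_r cexpi_0. Qed.

Lemma phi_eq0 (z : C) : phi z = 0 -> z = RtoC 0.
Proof. by case: z => [z1 z2] [-> ->]. Qed.

Lemma phi_poly_eval (d : nat) (b : nat -> C) (z : C) :
  phi (poly_eval d b z) = \sum_(i < d.+1) phi (b i) * phi z ^+ i.
Proof. by rewrite phi_sum_n; apply: eq_bigr => i _; rewrite phiM phi_pow_n. Qed.

End ComplexTransfer.

Lemma fourier_power_degree_le (s n d : nat) (u : Z -> R) (b : nat -> C) :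
  (0 < s)%coq_nat -> b d <> RtoC 0 -> b 0%N <> RtoC 0 ->
  (forall xi, fourier n u xi = RtoC (Cmod (poly_eval d b (cexpi xi)) ^ (2 * s))) ->
  (d * s <= n)%coq_nat.
Proof.
  move=> /ltP s0 bd b0 Hfour; apply/leP.
  pose K := (2 * d * s).+1.
  pose S := [seq phi (cexpi (INR i / INR K)) | i <- iota 0 K].
  apply: (@laurent_power_degree_le _ s n d (fun i => phi (Cconj (b i))) (fun i => phi (b i))
            (fun i => phi (RtoC (u (Z.sub (Z.of_nat i) (Z.of_nat n))))) S s0).
  - by apply/eqP => /phi_eq0; apply: Cconj_neq_0.
  - by apply/eqP => /phi_eq0.
  - rewrite map_inj_in_uniq ?iota_uniq // => i j.
    rewrite !mem_iota !add0n => /andP [_ Hi] /andP [_ Hj] /phi_inj.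
    by apply: cexpi_grid_inj; apply/ltP.
  - by rewrite size_map size_iota.
  - move=> _ /mapP [i _ ->]; set t := INR i / INR K; split.
    + apply/eqP => /phi_eq0 E; have := Cmod_cexpi t; rewrite E Cmod_0 => /esym; exact: R1_neq_R0.
    + have := congr1 phi (circle_identity s n d u b Hfour t).
      by rewrite phiM phi_Cpow phiM !phi_poly_eval phi_pow_n phi_cexpi_opp.
Qed.
End PolyDegree.

Lemma poly_eval_0 (m : nat) (b : nat -> C) : poly_eval m b 0 = b 0%nat.
Proof.
  unfold poly_eval. rewrite (sum_n_trunc _ 0); [|lia|].
  - rewrite sum_O; apply Cmult_1_r.
  - intros [|k] Hk; [lia|].
    transitivity (b (S k) * (0 * pow_n (RtoC 0) k))%C; [reflexivity|].
    rewrite Cmult_0_l; apply Cmult_0_r.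
Qed.

Lemma poly_eval_trunc (m d : nat) (b : nat -> C) (z : C) : (d <= m)%nat ->
  (forall j, (d < j <= m)%nat -> b j = 0) -> poly_eval m b z = poly_eval d b z.
Proof.
  intros Hd Hb. apply sum_n_trunc; [exact Hd|]. intros j Hj; rewrite Hb by exact Hj; apply Cmult_0_l.
Qed.

Lemma exists_last_nonzero (b : nat -> C) (i m : nat) : (i <= m)%nat -> b i <> 0 ->
  exists d, (i <= d <= m)%nat /\ b d <> 0 /\ forall j, (d < j <= m)%nat -> b j = 0.
Proof.
  intros Him Hi. induction m as [|m IH].
  - exists 0%nat; replace i with 0%nat in * by lia; split; [lia | split; [exact Hi | lia]].
  - destruct (classic (b (S m) = 0)) as [Hm|Hm].
    + destruct (Nat.eq_dec i (S m)) as [->|Hne]; [contradiction|].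
      destruct IH as [d [Hd [Hbd Htop]]]; [lia|].
      exists d; split; [lia | split; [exact Hbd|]].
      intros j Hj; destruct (Nat.eq_dec j (S m)) as [->|]; [exact Hm | apply Htop; lia].
    + exists (S m); split; [lia | split; [exact Hm | lia]].
Qed.

Lemma fourier_0 (n : nat) (u : Z -> R) : fourier n u 0 = zsum_win n (fun j => RtoC (u j)).
Proof.
  unfold fourier, zsum_win. apply sum_n_ext; intros i.
  rewrite Rmult_0_r, cexpi_0; apply Cmult_1_r.
Qed.

Lemma Cmod_poly_eval_1 (l n m : nat) (u : Z -> R) (b : nat -> C) : (0 < l)%nat ->
  zsum_win n (fun j => RtoC (u j)) = RtoC 1 ->
  (forall xi : R, fourier n u xi = RtoC (Cmod (poly_eval m b (cexpi xi)) ^ l)) ->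
  Cmod (poly_eval m b (cexpi 0)) = 1.
Proof.
  intros Hl Hsum Hfour.
  assert (H0 := Hfour 0); rewrite fourier_0, Hsum in H0.
  apply (f_equal fst) in H0; simpl in H0.
  destruct (pow_R1 _ _ (eq_sym H0)) as [H|H]; [|lia].
  rewrite Rabs_right in H by apply Rle_ge, Cmod_ge_0; exact H.
Qed.

Lemma poly_eval_degree_le (s q n m : nat) (u : Z -> R) (b : nat -> C) :
  (0 < s)%nat -> n = (q * s)%nat -> b 0%nat <> 0 ->
  (forall xi : R, fourier n u xi = RtoC (Cmod (poly_eval m b (cexpi xi)) ^ (2 * s))) ->
  forall i, (q < i <= m)%nat -> b i = 0.
Proof.
  intros Hs0 Hnq Hb0 Hfour i Hi; apply NNPP; intros Hbi.
  destruct (exists_last_nonzero b i m) as [d [Hd [Hbd Htop]]]; [lia | exact Hbi |].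
  assert (Hds : (d * s <= n)%nat).
  { apply (PolyDegree.fourier_power_degree_le s n d u b Hs0 Hbd Hb0).
    intros xi; rewrite Hfour, (poly_eval_trunc m d) by (lia || exact Htop); reflexivity. }
  nia.
Qed.

Theorem proposition1p3 (l n : nat) (u : Z -> R) (m : nat) (b : nat -> C) :
  (0 < l)%nat -> Nat.Even l ->
  (0 < n)%nat -> Nat.divide (l / 2) n ->
  (forall j : Z, (Z.abs j > Z.of_nat n)%Z -> u j = 0) ->
  (forall j : Z, u j = u (- j)%Z) ->
  zsum_win n (fun j => RtoC (u j)) = RtoC 1 ->
  (forall z : C, Cmod z < 1 -> poly_eval m b z <> RtoC 0) ->
  (forall xi : R, fourier n u xi = RtoC (Cmod (poly_eval m b (cexpi xi)) ^ l)) ->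
  Rbar_le (Finite ((2 / (1 + 2 * INR n / INR l)) ^ l)) (op_sup l n u).
Proof.
  intros Hl [s Hs] Hn [q Hq] _ _ Hsum Hzero Hfour.
  assert (Hs0 : (0 < s)%nat) by lia.
  assert (Hnq : n = (q * s)%nat) by (rewrite Hq, Hs, (Nat.mul_comm 2 s), Nat.div_mul; lia).
  assert (HN : 1 + 2 * INR n / INR l = INR (S q)).
  { assert (0 < INR s) by (apply lt_0_INR; lia).
    rewrite Hnq, Hs, S_INR, !mult_INR; simpl INR; field; lra. }
  assert (Hb0 : b 0%nat <> 0) by (rewrite <- (poly_eval_0 m b); apply Hzero; rewrite Cmod_0; lra).
  assert (Hdeg : forall i, (S q <= i <= m)%nat -> b i = 0).
  { intros i Hi; apply (poly_eval_degree_le s q n m u b Hs0 Hnq Hb0); [|lia].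
    intros xi; rewrite Hfour, Hs; reflexivity. }
  destruct (exists_unit_circle_point_ge (S q) m b) as [t Ht]; [lia | exact Hdeg |].
  rewrite (Cmod_poly_eval_1 l n m u b Hl Hsum Hfour), Rmult_1_r in Ht.
  eapply Rbar_le_trans; [| apply (op_sup_ge_symbol l n u t)]; simpl.
  rewrite HN, Cmod_mult, Cmod_pow, Hfour, Cmod_R, Rabs_right, <- Rpow_mult_distr
    by apply Rle_ge, pow_le, Cmod_ge_0.
  assert (0 < INR (S q)) by (apply lt_0_INR; lia).
  apply pow_incr; split; [apply Rlt_le, Rdiv_lt_0_compat; lra | exact Ht].
Qed.
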